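(* In the setting described in the context, let $c_0,c_1$ be real constants and let $D$ be the torsionless connection $$D\Xi^a=c_0X^a\varrho\otimes\varrho+c_1\big((-1)^{\hat a}\Xi^a\otimes\varrho-\varrho\otimes\Xi^a\big),\qquad a=1,2,3,$$ extended to $\Omega^1\otimes_{\mathcal A}\Omega^1$ by $D(\Xi^a\otimes\Xi^b)=D\Xi^a\otimes\Xi^b+(-1)^{\hat a}\sigma_{12}(\Xi^a\otimes D\Xi^b)$, $\sigma_{12}=\sigma\otimes1$. Let $g:\Omega^1\otimes_{\mathcal A}\Omega^1\to\mathcal A$ be the $\mathcal A$-bilinear ($OSp_h(2/1)$-invariant) metric with $g(\Xi^a\otimes\Xi^b)=g^{ab}$, where $$(g^{ab})=\begin{pmatrix}-\frac h2&0&-1\\0&1&0\\1&0&0\end{pmatrix}.$$ Then $D$ is compatible with $g$, i.e. $d\circ g=(1\otimes g)\circ D$ on $\Omega^1\otimes_{\mathcal A}\Omega^1$, only for the trivial choice $c_0=c_1=0$; for any other choice of $(c_0,c_1)$ the covariant derivative $D$ is not metric.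
   Context: Fix a real (commuting) parameter $h$. $\mathcal A$ is the $\mathbb Z_2$-graded algebra generated by odd $\theta_1,\theta_2$ and even $x$ with relations $[\theta_1,x]=-hx\theta_2$, $\{\theta_1,\theta_2\}=0$, $[\theta_2,x]=0$, $\theta_1^2=-\frac h2(x^2-2\theta_1\theta_2)$, $\theta_2^2=0$. Write $(X^1,X^2,X^3)=(\theta_1,x,\theta_2)$, index parities $\hat1=\hat3=0$, $\hat2=1$, and $\Xi^a=dX^a$, i.e. $\xi_1=d\theta_1$, $\eta=dx$, $\xi_2=d\theta_2$; $\xi_1,\xi_2$ are even and $\eta$ odd. The exterior derivative $d$ is nilpotent and satisfies the graded Leibniz rule. The differential calculus has the relations $\xi_1\wedge\eta-\eta\wedge\xi_1=h\eta\wedge\xi_2$, $\xi_1\wedge\xi_2-\xi_2\wedge\xi_1=h\xi_2\wedge\xi_2$, $\eta\wedge\xi_2=\xi_2\wedge\eta$, $\eta\wedge\eta=-\frac h2\xi_2\wedge\xi_2$; and $[\theta_1,\xi_1]=h(\theta_1\xi_2+x\eta-\theta_2\xi_1-\frac h2\theta_2\xi_2)$, $\{\theta_1,\eta\}=hx\xi_2$, $[\theta_1,\xi_2]=h\theta_2\xi_2$, $[x,\xi_1]=-h\theta_2\eta$, $[x,\eta]=-h\theta_2\xi_2$, $[x,\xi_2]=0$, $[\theta_2,\xi_1]=-h\theta_2\xi_2$, $\{\theta_2,\eta\}=0$, $[\theta_2,\xi_2]=0$. Set $\varrho=\theta_1\xi_2+x\eta-\theta_2\xi_1-\frac h2\theta_2\xi_2$.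 The map $\sigma$ on $\Omega^1\otimes_{\mathcal A}\Omega^1$ is the $\mathcal A$-bilinear map given by $\sigma(\xi_1\otimes\xi_1)=\xi_1\otimes\xi_1-h(\xi_1\otimes\xi_2+\eta\otimes\eta-\xi_2\otimes\xi_1-\frac h2\xi_2\otimes\xi_2)$, $\sigma(\xi_1\otimes\eta)=\eta\otimes\xi_1+h\xi_2\otimes\eta$, $\sigma(\xi_1\otimes\xi_2)=\xi_2\otimes\xi_1+h\xi_2\otimes\xi_2$, $\sigma(\eta\otimes\xi_1)=\xi_1\otimes\eta-h\eta\otimes\xi_2$, $\sigma(\eta\otimes\eta)=-\eta\otimes\eta-h\xi_2\otimes\xi_2$, $\sigma(\eta\otimes\xi_2)=\xi_2\otimes\eta$, $\sigma(\xi_2\otimes\xi_1)=\xi_1\otimes\xi_2-h\xi_2\otimes\xi_2$, $\sigma(\xi_2\otimes\eta)=\eta\otimes\xi_2$, $\sigma(\xi_2\otimes\xi_2)=\xi_2\otimes\xi_2$. The covariant derivative satisfies $D(f\xi)=df\otimes\xi+(-1)^{\hat f}fD\xi$ and $D(\xi f)=(-1)^{\hat\xi}\sigma(\xi\otimes df)+(D\xi)f$ for homogeneous $f\in\mathcal A$, $\xi\in\Omega^1$. The map $1\otimes g:\Omega^1\otimes_{\mathcal A}\Omega^1\otimes_{\mathcal A}\Omega^1\to\Omega^1$ applies $g$ to the last two tensor factors. *)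

From mathcomp Require Import all_boot all_order all_algebra.
From mathcomp Require Import reals.

Set Implicit Arguments.
Unset Strict Implicit.
Unset Printing Implicit Defensive.

Import Order.TTheory GRing.Theory Num.Theory.
Local Open Scope ring_scope.

(* index set {1,2,3} for X^a = (theta1, x, theta2) and Xi^a = (xi1, eta, xi2) *)
Inductive ix := i1 | i2 | i3.

Definition ix_eqb (a b : ix) : bool :=
  match a, b with
  | i1, i1 | i2, i2 | i3, i3 => true
  | _, _ => false
  end.

Section Superplane.
Variable R : realType.
Variable h : R.

(* The algebra A.  Every element is uniquely
     p0(x) + p1(x) th1 + p2(x) th2 + p12(x) th1 th2
   (powers of x written on the left).                                  *)
Record A := mkA { A0 : {poly R}; A1 : {poly R}; A2 : {poly R}; A12 : {poly R} }.

Definition zeroA : A := mkA 0 0 0 0.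
Definition polyA (p : {poly R}) : A := mkA p 0 0 0.
Definition cstA (c : R) : A := polyA c%:P.
Definition oneA : A := cstA 1.
Definition th1 : A := mkA 0 1 0 0.
Definition th2 : A := mkA 0 0 1 0.
Definition xA  : A := polyA 'X.

Definition addA (a b : A) : A :=
  mkA (A0 a + A0 b) (A1 a + A1 b) (A2 a + A2 b) (A12 a + A12 b).
Definition scaleA (c : R) (a : A) : A :=
  mkA (c *: A0 a) (c *: A1 a) (c *: A2 a) (c *: A12 a).
Definition oppA (a : A) : A := scaleA (-1) a.
Definition pmulA (p : {poly R}) (a : A) : A :=
  mkA (p * A0 a) (p * A1 a) (p * A2 a) (p * A12 a).
(* left multiplication by th2 and by th1, computed from the relations
   th2 x = x th2, th2^2 = 0, th2 th1 = - th1 th2,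
   th1 x = x th1 - h x th2, th1^2 = -h/2 x^2 + h th1 th2 *)
Definition lth2 (b : A) : A := mkA 0 0 (A0 b) (- A1 b).
Definition lth1 (b : A) : A :=
  mkA (- (h / 2) *: ('X^2 * A1 b))
      (A0 b)
      (- h *: ('X * (A0 b)^`()) - (h / 2) *: ('X^2 * A12 b))
      (h *: A1 b + h *: ('X * (A1 b)^`()) + A2 b).
Definition mulA (a b : A) : A :=
  addA (addA (pmulA (A0 a) b) (pmulA (A1 a) (lth1 b)))
       (addA (pmulA (A2 a) (lth2 b)) (pmulA (A12 a) (lth1 (lth2 b)))).

Definition evenA (a : A) : A := mkA (A0 a) 0 0 (A12 a).
Definition oddA (a : A) : A := mkA 0 (A1 a) (A2 a) 0.
(* f |-> (-1)^(hat f) f, extended additively *)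
Definition signA (a : A) : A := addA (evenA a) (oppA (oddA a)).

Definition sum3 (f : ix -> A) : A := addA (addA (f i1) (f i2)) (f i3).

Definition Xgen (a : ix) : A := match a with i1 => th1 | i2 => xA | i3 => th2 end.
Definition sgn (a : ix) : R := match a with i2 => -1 | _ => 1 end.

(* Omega^1 : free left A-module on Xi^1 = xi1, Xi^2 = eta, Xi^3 = xi2;
   omega = sum_a omega(a) Xi^a.                                        *)
Definition O1 := ix -> A.
(* Omega^1 (x)_A Omega^1 : t = sum_{a,b} t a b Xi^a (x) Xi^b *)
Definition T2 := ix -> ix -> A.
Definition T3 := ix -> ix -> ix -> A.

Definition Xi (a : ix) : O1 := fun c => if ix_eqb c a then oneA else zeroA.
Definition addO (w v : O1) : O1 := fun c => addA (w c) (v c).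
Definition lmulO (a : A) (w : O1) : O1 := fun c => mulA a (w c).
Definition mkO (u v w : A) : O1 := fun c => match c with i1 => u | i2 => v | i3 => w end.

(* sum_c w(c) F(c), where F(c) is the normal form of Xi^c * (something) *)
Definition linO (w : O1) (F : ix -> O1) : O1 :=
  fun d => sum3 (fun c => mulA (w c) (F c d)).

Definition rho : O1 := mkO (oppA th2) xA (addA th1 (scaleA (- (h / 2)) th2)).

(* Xi^c * p(x) :  xi1 p = p xi1 + h p' th2 eta,  eta p = p eta + h p' th2 xi2,
   xi2 p = p xi2   (from [x,xi1] = -h th2 eta, [x,eta] = -h th2 xi2, [x,xi2]=0) *)
Definition XiP (p : {poly R}) (c : ix) : O1 :=
  match c with
  | i1 => mkO (polyA p) (mkA 0 0 (h *: p^`()) 0) zeroA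
  | i2 => mkO zeroA (polyA p) (mkA 0 0 (h *: p^`()) 0)
  | i3 => mkO zeroA zeroA (polyA p)
  end.
(* Xi^c * th1, from [th1,xi1] = h rho, {th1,eta} = h x xi2, [th1,xi2] = h th2 xi2 *)
Definition XiT1 (c : ix) : O1 :=
  match c with
  | i1 => addO (lmulO th1 (Xi i1)) (fun d => scaleA (- h) (rho d))
  | i2 => mkO zeroA (oppA th1) (scaleA h xA)
  | i3 => mkO zeroA zeroA (addA th1 (scaleA (- h) th2))
  end.
(* Xi^c * th2, from [th2,xi1] = -h th2 xi2, {th2,eta} = 0, [th2,xi2] = 0 *)
Definition XiT2 (c : ix) : O1 :=
  match c with
  | i1 => mkO th2 zeroA (scaleA h th2)
  | i2 => mkO zeroA (oppA th2) zeroA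
  | i3 => mkO zeroA zeroA th2
  end.

Definition rP (w : O1) (p : {poly R}) : O1 := linO w (XiP p).
Definition rT1 (w : O1) : O1 := linO w XiT1.
Definition rT2 (w : O1) : O1 := linO w XiT2.
Definition rA (w : O1) (b : A) : O1 :=
  addO (addO (rP w (A0 b)) (rT1 (rP w (A1 b))))
       (addO (rT2 (rP w (A2 b))) (rT2 (rT1 (rP w (A12 b))))).

(* exterior derivative d : A -> Omega^1, determined by d x = eta,
   d th1 = xi1, d th2 = xi2 and the graded Leibniz rule:
   d p(x) = p'(x) eta + h/2 p''(x) th2 xi2,
   d (th1 th2) = xi1 th2 - th1 xi2 = th2 xi1 + h th2 xi2 - th1 xi2 *)
Definition dP (p : {poly R}) : O1 :=
  mkO zeroA (polyA p^`()) (mkA 0 0 ((h / 2) *: p^`(2)) 0).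
Definition dth12 : O1 := mkO th2 zeroA (addA (scaleA h th2) (oppA th1)).
Definition dA (b : A) : O1 :=
  addO (addO (dP (A0 b))
             (addO (rT1 (dP (A1 b))) (lmulO (polyA (A1 b)) (Xi i1))))
       (addO (addO (rT2 (dP (A2 b))) (lmulO (polyA (A2 b)) (Xi i3)))
             (addO (rT2 (rT1 (dP (A12 b)))) (lmulO (polyA (A12 b)) dth12))).

Definition addT2 (s t : T2) : T2 := fun a b => addA (s a b) (t a b).
Definition addT3 (s t : T3) : T3 := fun a b c => addA (s a b c) (t a b c).
Definition scaleT2 (c : R) (t : T2) : T2 := fun a b => scaleA c (t a b).
Definition scaleT3 (c : R) (t : T3) : T3 := fun a b e => scaleA c (t a b e).
Definition lmulT2 (f : A) (t : T2) : T2 := fun a b => mulA f (t a b).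
Definition lmulT3 (f : A) (t : T3) : T3 := fun a b c => mulA f (t a b c).
Definition sumT3 (F : ix -> ix -> T3) : T3 :=
  fun i j k => sum3 (fun a => sum3 (fun b => F a b i j k)).

Definition tens11 (w v : O1) : T2 := fun a b => rA w (v b) a.
Definition tens12 (w : O1) (t : T2) : T3 := fun a b c => rA w (t b c) a.
Definition tens2Xi (t : T2) (e : ix) : T3 :=
  fun a b c => if ix_eqb c e then t a b else zeroA.
Definition tens1XiXi (w : O1) (e f : ix) : T3 :=
  fun a b c => if ix_eqb b e && ix_eqb c f then w a else zeroA.

(* the braiding sigma: sigma(Xi^a (x) Xi^b) = sum_{c,d} sigc a b c d Xi^c (x) Xi^d *)
Definition sigc (a b c d : ix) : R :=
  match a, b, c, d with
  | i1, i1, i1, i1 => 1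
  | i1, i1, i1, i3 => - h
  | i1, i1, i2, i2 => - h
  | i1, i1, i3, i1 => h
  | i1, i1, i3, i3 => h ^+ 2 / 2
  | i1, i2, i2, i1 => 1
  | i1, i2, i3, i2 => h
  | i1, i3, i3, i1 => 1
  | i1, i3, i3, i3 => h
  | i2, i1, i1, i2 => 1
  | i2, i1, i2, i3 => - h
  | i2, i2, i2, i2 => -1
  | i2, i2, i3, i3 => - h
  | i2, i3, i3, i2 => 1
  | i3, i1, i1, i3 => 1
  | i3, i1, i3, i3 => - h
  | i3, i2, i2, i3 => 1
  | i3, i3, i3, i3 => 1
  | _, _, _, _ => 0
  end.
Definition sigma12 (t : T3) : T3 :=
  fun c d e => sum3 (fun a => sum3 (fun b => scaleA (sigc a b c d) (t a b e))).

Definition gc (a b : ix) : R :=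
  match a, b with
  | i1, i1 => - (h / 2)
  | i1, i3 => -1
  | i2, i2 => 1
  | i3, i1 => 1
  | _, _ => 0
  end.
Definition gT2 (t : T2) : A := sum3 (fun a => sum3 (fun b => scaleA (gc a b) (t a b))).
Definition oneg (t : T3) : O1 :=
  fun a => sum3 (fun b => sum3 (fun c => scaleA (gc b c) (t a b c))).

Section Connection.
Variables c0 c1 : R.

Definition DXi (a : ix) : T2 :=
  addT2 (scaleT2 c0 (lmulT2 (Xgen a) (tens11 rho rho)))
        (scaleT2 c1 (addT2 (scaleT2 (sgn a) (tens11 (Xi a) rho))
                           (scaleT2 (-1) (tens11 rho (Xi a))))).

Definition DXiXi (a b : ix) : T3 :=
  addT3 (tens2Xi (DXi a) b) (scaleT3 (sgn a) (sigma12 (tens12 (Xi a) (DXi b)))).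

(* extension to all of Omega^1 (x)_A Omega^1 by
   D(f tau) = df (x) tau + (-1)^(hat f) f D tau *)
Definition D2 (t : T2) : T3 :=
  sumT3 (fun a b => addT3 (tens1XiXi (dA (t a b)) a b)
                          (lmulT3 (signA (t a b)) (DXiXi a b))).

Definition metric_compatible : Prop :=
  forall (t : T2) (a : ix), dA (gT2 t) a = oneg (D2 t) a.

End Connection.
End Superplane.

(* Since g has constant coefficients and d is R-linear, d o g coincides with
   (1 (x) g) applied to the differential part  sum d(t_ab) (x) Xi^a (x) Xi^b  of D.
   Hence D is metric iff (1 (x) g) annihilates the connection part
   sum (-1)^(t_ab) t_ab D(Xi^a (x) Xi^b) for every t.  This part vanishes when
   c0 = c1 = 0.  Conversely, the eta-component of (1 (x) g) D(Xi^3 (x) Xi^1) is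
   2 (c0 x th1 th2 - c1 x), which forces c0 = c1 = 0. *)

From mathcomp Require Import all_boot all_order all_algebra.
From mathcomp Require Import reals ring.
From mathcomp Require boolp.

Import GRing.Theory Num.Theory.
Local Open Scope ring_scope.

Set Implicit Arguments.
Unset Strict Implicit.
Unset Printing Implicit Defensive.

Lemma A_ext (R : realType) (a b : A R) :
  A0 a = A0 b -> A1 a = A1 b -> A2 a = A2 b -> A12 a = A12 b -> a = b.
Proof. by case: a b => ? ? ? ? [? ? ? ?] /= -> -> -> ->. Qed.

Ltac poly_simpl :=
  rewrite ?(derivD, derivN, derivZ, derivM, derivC, derivX) -?mul_polyC.

(* Below the projections A0 ... A12, [simpl] would unfold these constants into
   huge normal forms, and [ring] compares atoms up to conversion; abstracting
   them first keeps both cheap. *)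
Ltac abstract_atoms :=
  repeat match goal with
  | |- context [mulA ?h ?a ?b] => generalize (mulA h a b); intro
  | |- context [linO ?h ?w ?F ?d] => generalize (linO h w F d); intro
  | |- context [rP ?h ?w ?p ?d] => generalize (rP h w p d); intro
  | |- context [rT1 ?h ?w ?d] => generalize (rT1 h w d); intro
  | |- context [rT2 ?h ?w ?d] => generalize (rT2 h w d); intro
  | |- context [tens11 ?h ?w ?v ?a ?b] => generalize (tens11 h w v a b); intro
  | |- context [dP ?h ?p ?c] => generalize (dP h p c); intro
  | |- context [dA ?h ?a ?c] => generalize (dA h a c); intro
  | |- context [rA ?h ?w ?a ?c] => generalize (rA h w a c); intro
  | |- context [signA ?a] => generalize (signA a); intro
  | |- context [DXi ?h ?c0 ?c1 ?a ?i ?j] => generalize (DXi h c0 c1 a i j); intro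
  | |- context [DXiXi ?h ?c0 ?c1 ?a ?b ?i ?j ?k] => generalize (DXiXi h c0 c1 a b i j k); intro
  end.

Ltac poly_ring := rewrite /=; poly_simpl; ring.

Ltac A_ring := apply: A_ext; abstract_atoms; poly_ring.

Section Superplane.
Variables (R : realType) (h : R).

Lemma mulA_addl (a a' b : A R) : mulA h (addA a a') b = addA (mulA h a b) (mulA h a' b).
Proof. by case: a a' b => [? ? ? ?] [? ? ? ?] [? ? ? ?]; rewrite /mulA; A_ring. Qed.
Lemma mulA_scalel c (a b : A R) : mulA h (scaleA c a) b = scaleA c (mulA h a b).
Proof. by case: a b => [? ? ? ?] [? ? ? ?]; rewrite /mulA; A_ring. Qed.
Lemma mulA_scaler c (a b : A R) : mulA h a (scaleA c b) = scaleA c (mulA h a b).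
Proof. by case: a b => [? ? ? ?] [? ? ? ?]; rewrite /mulA; A_ring. Qed.
Lemma mulA0l (a : A R) : mulA h (zeroA R) a = zeroA R.
Proof. by case: a => [? ? ? ?]; rewrite /mulA; A_ring. Qed.
Lemma mulA0r (a : A R) : mulA h a (zeroA R) = zeroA R.
Proof. by case: a => [? ? ? ?]; rewrite /mulA; A_ring. Qed.
Lemma mulA1l (a : A R) : mulA h (oneA R) a = a.
Proof. by case: a => [? ? ? ?]; rewrite /mulA; A_ring. Qed.
Lemma mulA1r (a : A R) : mulA h a (oneA R) = a.
Proof. by case: a => [? ? ? ?]; rewrite /mulA; A_ring. Qed.
Lemma signA0 : signA (zeroA R) = zeroA R.
Proof. by rewrite /signA; A_ring. Qed.
Lemma signA1 : signA (oneA R) = oneA R.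
Proof. by rewrite /signA; A_ring. Qed.

Lemma linO_add {F : ix -> O1 R} {w u v : O1 R} : w =1 (fun c => addA (u c) (v c)) ->
  linO h w F =1 (fun d => addA (linO h u F d) (linO h v F d)).
Proof. by move=> E d; rewrite /linO /sum3 !E !mulA_addl; A_ring. Qed.
Lemma linO_scale {F : ix -> O1 R} {r : R} {w v : O1 R} : w =1 (fun c => scaleA r (v c)) ->
  linO h w F =1 (fun d => scaleA r (linO h v F d)).
Proof. by move=> E d; rewrite /linO /sum3 !E !mulA_scalel; A_ring. Qed.

Lemma dP_add p q : dP h (p + q) =1 (fun c => addA (dP h p c) (dP h q c)).
Proof. by case; rewrite /dP; A_ring. Qed.
Lemma dP_scale r p : dP h (r *: p) =1 (fun c => scaleA r (dP h p c)).
Proof. by case; rewrite /dP; A_ring. Qed.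

Lemma polyA_add (p q : {poly R}) : polyA (p + q) = addA (polyA p) (polyA q).
Proof. by A_ring. Qed.
Lemma polyA_scale r (p : {poly R}) : polyA (r *: p) = scaleA r (polyA p).
Proof. by A_ring. Qed.

Lemma dA_add a b c : dA h (addA a b) c = addA (dA h a c) (dA h b c).
Proof.
rewrite /dA /rT1 /rT2 /addO /lmulO /= !polyA_add !mulA_addl !dP_add.
rewrite !(linO_add (dP_add _ _)) (linO_add (linO_add (dP_add (A12 a) (A12 b)))).
A_ring.
Qed.

Lemma dA_scale r a c : dA h (scaleA r a) c = scaleA r (dA h a c).
Proof.
rewrite /dA /rT1 /rT2 /addO /lmulO /= !polyA_scale !mulA_scalel !dP_scale.
rewrite !(linO_scale (dP_scale _ _)) (linO_scale (linO_scale (dP_scale r (A12 a)))).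
A_ring.
Qed.

Definition D2_diff (t : T2 R) : T3 R :=
  sumT3 (fun a b => tens1XiXi (dA h (t a b)) a b).
Definition D2_conn (c0 c1 : R) (t : T2 R) : T3 R :=
  sumT3 (fun a b => lmulT3 h (signA (t a b)) (DXiXi h c0 c1 a b)).

Lemma sumT3_add (F G : ix -> ix -> T3 R) :
  sumT3 (fun a b => addT3 (F a b) (G a b)) = addT3 (sumT3 F) (sumT3 G).
Proof. by do 3 apply: boolp.funext => ?; rewrite /sumT3 /addT3 /sum3; A_ring. Qed.

Lemma D2_split c0 c1 t : D2 h c0 c1 t = addT3 (D2_diff t) (D2_conn c0 c1 t).
Proof. exact: sumT3_add. Qed.

Lemma oneg_add s t a : oneg h (addT3 s t) a = addA (oneg h s a) (oneg h t a).
Proof. by rewrite /oneg /addT3 /sum3; A_ring. Qed.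

Lemma oneg_D2_diff t a : oneg h (D2_diff t) a = dA h (gT2 h t) a.
Proof.
rewrite /gT2 /sum3 !dA_add !dA_scale.
rewrite /oneg /D2_diff /sumT3 /sum3 /tens1XiXi /=.
A_ring.
Qed.

Lemma addA_eq_self (x y : A R) : x = addA x y -> y = zeroA R.
Proof.
have addr_eq_self (p q : {poly R}) : p = p + q -> q = 0.
  by move=> E; apply: (@addrI _ p); rewrite addr0 -E.
case: x y => ? ? ? ? [? ? ? ?] [/addr_eq_self -> /addr_eq_self -> /addr_eq_self ->].
by move/addr_eq_self ->.
Qed.

Lemma metric_compatibleP c0 c1 :
  metric_compatible h c0 c1 <-> forall t a, oneg h (D2_conn c0 c1 t) a = zeroA R.
Proof.
split=> compat t a; move: (compat t a);
  rewrite D2_split oneg_add oneg_D2_diff; first exact: addA_eq_self.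
by move=> ->; A_ring.
Qed.

Lemma XiP_cst a c : XiP h a%:P c =1 (fun d => scaleA a (Xi R c d)).
Proof. by case: c => -[]; A_ring. Qed.

Lemma rP_cst w a : rP h w a%:P =1 (fun d => scaleA a (w d)).
Proof.
move=> d; rewrite /rP /linO /sum3 !XiP_cst !mulA_scaler.
by case: d; rewrite /= !mulA1r !mulA0r; A_ring.
Qed.

Lemma rA_cst w y a b c e :
  A0 y = a%:P -> A1 y = b%:P -> A2 y = c%:P -> A12 y = e%:P ->
  rA h w y =1 (fun d => addA (addA (scaleA a (w d)) (scaleA b (rT1 h w d)))
                             (addA (scaleA c (rT2 h w d)) (scaleA e (rT2 h (rT1 h w) d)))).
Proof.
move=> E0 E1 E2 E3 d; rewrite /rA /addO E0 E1 E2 E3 rP_cst /rT1 /rT2.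
rewrite (linO_scale (rP_cst _ _)) (linO_scale (rP_cst _ _)).
by rewrite (linO_scale (linO_scale (rP_cst w e))); A_ring.
Qed.

Lemma rA_one w : rA h w (oneA R) =1 w.
Proof. by move=> d; rewrite (@rA_cst _ _ 1 0 0 0) ?polyC0 //; A_ring. Qed.

Lemma rA_zero w : rA h w (zeroA R) =1 (fun=> zeroA R).
Proof. by move=> d; rewrite (@rA_cst _ _ 0 0 0 0) ?polyC0 //; A_ring. Qed.

Lemma tens11_Xi w b a c :
  tens11 h w (Xi R b) a c = if ix_eqb c b then w a else zeroA R.
Proof. by rewrite /tens11 /Xi; case: ifP => _; rewrite ?rA_one ?rA_zero. Qed.

Lemma eq_linO F (w w' : O1 R) : w =1 w' -> linO h w F =1 linO h w' F.
Proof. by move=> E d; rewrite /linO /sum3 !E. Qed.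

(* xi2 y = (xi2_twist y) xi2, since xi2 th1 = (th1 - h th2) xi2. *)
Definition xi2_twist (y : A R) : A R := mkA (A0 y) (A1 y) (A2 y - h *: A1 y) (A12 y).

Lemma rA_Xi3 y : rA h (Xi R i3) y =1 (fun d => if d is i3 then xi2_twist y else zeroA R).
Proof.
have rP_Xi3 p : rP h (Xi R i3) p =1 XiP h p i3.
  by move=> d; rewrite /rP /linO /sum3 /= !mulA0l mulA1l; A_ring.
move=> d; rewrite /rA /addO /rT1 /rT2 !(eq_linO _ (rP_Xi3 _)) rP_Xi3.
rewrite !(eq_linO _ (eq_linO _ (rP_Xi3 _))).
rewrite /linO /sum3 /= !mulA0l; case: d; rewrite /mulA; A_ring.
Qed.

Lemma tens11_Xi3_2 v c : tens11 h (Xi R i3) v i2 c = zeroA R.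
Proof. by rewrite /tens11 rA_Xi3. Qed.

Lemma DXi_zero a i j : DXi h 0 0 a i j = zeroA R.
Proof. by rewrite /DXi /addT2 /scaleT2 /lmulT2; A_ring. Qed.

Lemma DXiXi_zero a b i j k : DXiXi h 0 0 a b i j k = zeroA R.
Proof.
rewrite /DXiXi /addT3 /tens2Xi /scaleT3 /sigma12 /tens12 /sum3 !DXi_zero !rA_zero if_same.
by A_ring.
Qed.

Lemma oneg_D2_conn_zero t a : oneg h (D2_conn 0 0 t) a = zeroA R.
Proof. by rewrite /oneg /D2_conn /sumT3 /lmulT3 /sum3 /= !DXiXi_zero !mulA0r; A_ring. Qed.

Definition XiXi (a b : ix) : T2 R :=
  fun c d => if ix_eqb c a && ix_eqb d b then oneA R else zeroA R.

Lemma mulA_signA_XiXi a b c d x :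
  mulA h (signA (XiXi a b c d)) x = if ix_eqb c a && ix_eqb d b then x else zeroA R.
Proof. by rewrite /XiXi; case: ifP => _; rewrite ?signA1 ?mulA1l ?signA0 ?mulA0l. Qed.

Lemma D2_conn_XiXi c0 c1 a b : D2_conn c0 c1 (XiXi a b) = DXiXi h c0 c1 a b.
Proof.
do 3 apply: boolp.funext => ?; rewrite /D2_conn /sumT3 /lmulT3 /sum3 /= !mulA_signA_XiXi.
by case: a; case: b; A_ring.
Qed.

Lemma rT1_rho_2 : rT1 h (rho h) i2 = mkA 0 (- 'X) (h *: 'X) 0.
Proof. by rewrite /rT1 /linO /sum3 /= /mulA; A_ring. Qed.

Lemma rT2_rho_2 : rT2 h (rho h) i2 = mkA 0 0 (- 'X) 0.
Proof. by rewrite /rT2 /linO /sum3 /= /mulA; A_ring. Qed.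

Lemma rT2_Xi1_2 : rT2 h (Xi R i1) i2 = zeroA R.
Proof. by rewrite /rT2 /linO /sum3 /= /mulA; A_ring. Qed.

Lemma tens11_rho_rho_21 : tens11 h (rho h) (rho h) i2 i1 = mkA 0 0 'X 0.
Proof.
rewrite /tens11 (@rA_cst _ _ 0 0 (-1) 0) ?rT2_rho_2; [A_ring | poly_ring..].
Qed.

Lemma tens11_rho_rho_23 : tens11 h (rho h) (rho h) i2 i3 = mkA 0 (- 'X) ((h + h / 2) *: 'X) 0.
Proof.
rewrite /tens11 (@rA_cst _ _ 0 1 (- (h / 2)) 0) ?rT1_rho_2 ?rT2_rho_2; [A_ring | poly_ring..].
Qed.

Lemma tens11_Xi1_rho_21 : tens11 h (Xi R i1) (rho h) i2 i1 = zeroA R.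
Proof.
rewrite /tens11 (@rA_cst _ _ 0 0 (-1) 0) ?rT2_Xi1_2; [A_ring | poly_ring..].
Qed.

Lemma sigma12_Xi3 t c d e : c <> i3 ->
  sigma12 h (tens12 h (Xi R i3) t) c d e = if d is i3 then xi2_twist (t c e) else zeroA R.
Proof.
rewrite /sigma12 /tens12 /sum3 !rA_Xi3 /=.
by case: c => // _; case: d; A_ring.
Qed.

Section Connection.
Variables c0 c1 : R.

Definition kappa : A R := mkA (- c1 *: 'X) 0 0 (c0 *: 'X).

Lemma DXi3_21 : DXi h c0 c1 i3 i2 i1 = zeroA R.
Proof.
rewrite /DXi /addT2 /scaleT2 /lmulT2 tens11_rho_rho_21 tens11_Xi3_2 tens11_Xi /=.
by rewrite /mulA; A_ring.
Qed.

Lemma DXi3_23 : DXi h c0 c1 i3 i2 i3 = kappa.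
Proof.
rewrite /DXi /addT2 /scaleT2 /lmulT2 tens11_rho_rho_23 tens11_Xi3_2 tens11_Xi /=.
by rewrite /mulA; A_ring.
Qed.

Lemma DXi1_21 : DXi h c0 c1 i1 i2 i1 = kappa.
Proof.
rewrite /DXi /addT2 /scaleT2 /lmulT2 tens11_rho_rho_21 tens11_Xi1_rho_21 tens11_Xi /=.
by rewrite /mulA; A_ring.
Qed.

Lemma DXiXi31_2 b c :
  DXiXi h c0 c1 i3 i1 i2 b c =
  addA (if c is i1 then DXi h c0 c1 i3 i2 b else zeroA R)
       (if b is i3 then xi2_twist (DXi h c0 c1 i1 i2 c) else zeroA R).
Proof. by rewrite /DXiXi /addT3 /tens2Xi /scaleT3 sigma12_Xi3 //; case: b; case: c; A_ring. Qed.

Lemma oneg_DXiXi31_2 : oneg h (DXiXi h c0 c1 i3 i1) i2 = scaleA 2 kappa.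
Proof.
rewrite /oneg /sum3 !DXiXi31_2 /= DXi3_21 DXi3_23 DXi1_21.
by A_ring.
Qed.

Lemma kappa_eq0 : scaleA 2 kappa = zeroA R -> c0 = 0 /\ c1 = 0.
Proof.
have scale2X_eq0 (c : R) : 2 *: (c *: 'X) = 0 :> {poly R} -> c = 0.
  by move/eqP; rewrite scalerA scaler_eq0 polyX_eq0 orbF mulf_eq0 pnatr_eq0 => /eqP.
by case=> /scale2X_eq0/eqP; rewrite oppr_eq0 => /eqP-> _ _ /scale2X_eq0.
Qed.
End Connection.
End Superplane.

Theorem mainTheorem4 (R : realType) (h c0 c1 : R) :
  metric_compatible h c0 c1 <-> (c0 = 0 /\ c1 = 0)%R.
Proof.
rewrite metric_compatibleP; split=> [compat | [-> ->] t a]; last exact: oneg_D2_conn_zero.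
apply: kappa_eq0; rewrite -(oneg_DXiXi31_2 h) -D2_conn_XiXi.
exact: compat.
Qed.
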